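(* Let $d\ge1$, let $\nu_0:\mathbb{Z}^d\to[0,\infty)$ have finite support, and let $x_1,x_2,\ldots\in\mathbb{Z}^d$ be a sequence in which every $x\in\mathbb{Z}^d$ appears infinitely often. Let $u_k(x)$ be the total mass emitted by $x$ and $\nu_k(x)$ the mass present at $x$ after starting from $\nu_0$ and toppling $x_1,\ldots,x_k$ in succession. Then $u_k\uparrow u$ and $\nu_k\to\nu$ pointwise, where $u$ is finite and $\nu\le 1$. Moreover, the limits $u$ and $\nu$ do not depend on the choice of the sequence $(x_k)$.
   Context: Divisible sandpile: a mass distribution is a function $\mu:\mathbb{Z}^d\to[0,\infty)$. Toppling a site $x$ replaces $\mu$ by $\mu+\alpha\,\Delta\delta_x$ where $\alpha=\max(\mu(x)-1,0)$; i.e. if $\mu(x)>1$, the site keeps mass $1$ and sends mass $(\mu(x)-1)/(2d)$ to each of its $2d$ lattice neighbors, and if $\mu(x)\le1$ nothing happens. The mass emitted by $x$ in that toppling is $\alpha$. Here $\Delta f(x)=\frac{1}{2d}\sum_{y\sim x}f(y)-f(x)$ is the discrete Laplacian, the sum over the $2d$ lattice neighbors of $x$, and $\delta_x$ is the indicator of $\{x\}$. *)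

From Stdlib Require Import Reals Lra Lia ZArith List.
Import ListNotations.
Open Scope R_scope.

(* A site of Z^d is represented by a list of integers of length d.
   Only lists of length d are ever considered in the statement. *)
Definition site := list Z.

Definition site_eq_dec : forall x y : site, {x = y} + {x <> y} :=
  list_eq_dec Z.eq_dec.

(* x + c e_i *)
Definition shift (x : site) (i : nat) (c : Z) : site :=
  firstn i x ++ (nth i x 0%Z + c)%Z :: skipn (S i) x.

Definition neighbors (d : nat) (x : site) : list site :=
  flat_map (fun i => [shift x i 1%Z; shift x i (-1)%Z]) (seq 0 d).

Definition laplacian (d : nat) (f : site -> R) (x : site) : R :=
  / (2 * INR d) * fold_right Rplus 0 (map f (neighbors d x)) - f x.

Definition delta (x : site) : site -> R :=
  fun y => if site_eq_dec y x then 1 else 0.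

Definition emitted (mu : site -> R) (x : site) : R := Rmax (mu x - 1) 0.

Definition topple (d : nat) (mu : site -> R) (x : site) : site -> R :=
  fun y => mu y + emitted mu x * laplacian d (delta x) y.

(* (nu_k, u_k): configuration and odometer after toppling xs 0, ..., xs (k-1)
   (i.e. x_1, ..., x_k in the paper's 1-based indexing). *)
Fixpoint run (d : nat) (nu0 : site -> R) (xs : nat -> site) (k : nat)
  : (site -> R) * (site -> R) :=
  match k with
  | O => (nu0, fun _ => 0)
  | S k' =>
      let (nu, u) := run d nu0 xs k' in
      let x := xs k' in
      (topple d nu x,
       fun y => u y + (if site_eq_dec y x then emitted nu x else 0))
  end.

Definition nu_k d nu0 xs k : site -> R := fst (run d nu0 xs k).
Definition u_k d nu0 xs k : site -> R := snd (run d nu0 xs k).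

Definition visits_all_io (d : nat) (xs : nat -> site) : Prop :=
  (forall k, length (xs k) = d) /\
  (forall x : site, length x = d -> forall N, exists k, (N <= k)%nat /\ xs k = x).

(* Write u_k, nu_k for the odometer and the configuration after k topplings.
   The proof rests on three facts.
   - Conservation: toppling x with emitted mass a adds a * Delta delta_x to the
     configuration, hence nu_k = nu0 + Delta u_k for every k.
   - Least action principle: if w >= 0 and nu0 + Delta w <= 1 on Z^d (we call
     such w a supersolution), then u_k <= w for every k and every toppling
     sequence, by induction on k (only the toppled site can increase, and
     it only increases up to the value forced by the neighbours).
   - Existence of a supersolution: when nu0 has finite support L, the function
     w(y) = sum_{z in L} c (|y_1 - z_1| - b)^2 of the first coordinate works
     for suitable c, b >= 0, since its second difference is 2c|L| except on
     the slices through L, where it is smaller by 4cb.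
   Hence u_k increases to a finite limit u; by conservation nu_k converges to
   nu0 + Delta u, which is <= 1 because each site is toppled infinitely often
   and is left with mass <= 1 just after each of its topplings.  Thus u is a
   supersolution itself, and by the least action principle the limits u, u'
   of two toppling sequences satisfy u <= u' <= u. *)
From Pilot Require Import Defs.
From Stdlib Require Import Reals List.
From Stdlib Require Import Lra Lia ZArith Classical ClassicalEpsilon.
(* re-import so that [shift] refers to the lattice shift, not ZArith's *)
Import Pilot.Defs.
Import ListNotations.
Open Scope R_scope.

Local Notation sum_over l f := (fold_right Rplus 0 (map f l)).

Lemma sum_ext {A} (f g : A -> R) (l : list A) :
  (forall z, In z l -> f z = g z) -> sum_over l f = sum_over l g.
Proof.
  induction l as [|a l IH]; simpl; intros H; [lra|].
  rewrite H, IH by auto. ring.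
Qed.

Lemma sum_zero {A} (f : A -> R) (l : list A) :
  (forall z, In z l -> f z = 0) -> sum_over l f = 0.
Proof.
  induction l as [|a l IH]; simpl; intros H; [lra|].
  rewrite H, IH by auto. ring.
Qed.

Lemma sum_le {A} (f g : A -> R) (l : list A) :
  (forall z, In z l -> f z <= g z) -> sum_over l f <= sum_over l g.
Proof.
  induction l as [|a l IH]; simpl; intros H; [lra|].
  apply Rplus_le_compat; auto.
Qed.

Lemma sum_lin {A} (f g : A -> R) (e : R) (l : list A) :
  sum_over l (fun y => f y + e * g y) = sum_over l f + e * sum_over l g.
Proof. induction l as [|a l IH]; simpl; [ring|]. rewrite IH; ring. Qed.

Lemma sum_app (l1 l2 : list R) :
  fold_right Rplus 0 (l1 ++ l2) = fold_right Rplus 0 l1 + fold_right Rplus 0 l2.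
Proof. induction l1 as [|a l1 IH]; simpl; [ring|]. rewrite IH; ring. Qed.

Lemma sum_bound {A} (f : A -> R) (k : R) (l : list A) :
  (forall z, f z <= k) -> sum_over l f <= INR (length l) * k.
Proof.
  intros H. induction l as [|a l IH]; cbn -[INR]; [simpl; lra|].
  rewrite S_INR. specialize (H a). lra.
Qed.

Lemma sum_bound_in {A} (f : A -> R) (k : R) (l : list A) x :
  In x l -> (forall z, f z <= k) -> sum_over l f + k <= f x + INR (length l) * k.
Proof.
  intros Hx H. induction l as [|a l IH]; cbn -[INR] in *; [tauto|].
  rewrite S_INR. destruct Hx as [->|Hx].
  - pose proof (sum_bound f k l H). lra.
  - specialize (IH Hx). specialize (H a). lra.
Qed.

Lemma sum_abs_nonneg {A} (f : A -> R) (l : list A) : 0 <= sum_over l (fun z => Rabs (f z)).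
Proof. induction l as [|a l IH]; simpl; [lra|]. pose proof (Rabs_pos (f a)); lra. Qed.

Lemma sum_abs_ge {A} (f : A -> R) (l : list A) x :
  In x l -> f x <= sum_over l (fun z => Rabs (f z)).
Proof.
  induction l as [|a l IH]; simpl; [tauto|].
  pose proof (sum_abs_nonneg f l). pose proof (Rabs_pos (f a)).
  intros [->|Hx]; [pose proof (Rle_abs (f x))|specialize (IH Hx)]; lra.
Qed.

Lemma cv_const c : Un_cv (fun _ => c) c.
Proof. intros e He. exists O. intros. unfold R_dist. rewrite Rminus_diag, Rabs_R0; lra. Qed.

Lemma cv_le (a : nat -> R) l c : Un_cv a l -> (forall k, a k <= c) -> l <= c.
Proof. intros Ha Hc. exact (Rle_cv_lim Hc Ha (cv_const c)). Qed.

Lemma cv_ge (a : nat -> R) l c : Un_cv a l -> (forall k, c <= a k) -> c <= l.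
Proof. intros Ha Hc. exact (Rle_cv_lim Hc (cv_const c) Ha). Qed.

Lemma cv_sum {A} (f : nat -> A -> R) (g : A -> R) (l : list A) :
  (forall z, In z l -> Un_cv (fun k => f k z) (g z)) ->
  Un_cv (fun k => sum_over l (f k)) (sum_over l g).
Proof.
  induction l as [|a l IH]; simpl; intros H; [apply cv_const|].
  apply CV_plus; auto.
Qed.

Lemma length_shift (x : site) i (c : Z) :
  (i < length x)%nat -> length (shift x i c) = length x.
Proof.
  intros H. unfold shift. rewrite length_app, firstn_length_le by lia.
  cbn [length]. rewrite length_skipn. lia.
Qed.

Lemma nth_shift (x : site) i (c : Z) :
  (i < length x)%nat -> nth i (shift x i c) 0%Z = (nth i x 0%Z + c)%Z.
Proof.
  intros H. unfold shift. rewrite app_nth2; rewrite firstn_length_le by lia; [|lia].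
  rewrite Nat.sub_diag. reflexivity.
Qed.

Lemma in_neighbors d (x y : site) : In y (neighbors d x) ->
  exists i, (i < d)%nat /\ (y = shift x i 1 \/ y = shift x i (-1)).
Proof.
  unfold neighbors. rewrite in_flat_map. intros [i [Hi Hy]].
  apply in_seq in Hi. exists i. split; [lia|]. simpl in Hy. intuition.
Qed.

Lemma neighbors_length d (x y : site) :
  length x = d -> In y (neighbors d x) -> length y = d.
Proof.
  intros Hx Hy. destruct (in_neighbors _ _ _ Hy) as [i [Hi [-> | ->]]];
  rewrite length_shift; lia.
Qed.

Lemma neighbors_neq d (x y : site) : length x = d -> In y (neighbors d x) -> y <> x.
Proof.
  intros Hx Hy E. destruct (in_neighbors _ _ _ Hy) as [i [Hi [H | H]]]; rewrite H in E;
  assert (E2 := f_equal (fun l => nth i l 0%Z) E); simpl in E2;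
  rewrite nth_shift in E2 by lia; lia.
Qed.

Lemma laplacian_ext d f g x :
  (forall y, In y (neighbors d x) -> f y = g y) -> f x = g x ->
  laplacian d f x = laplacian d g x.
Proof. intros Hn Hx. unfold laplacian. rewrite (sum_ext f g) by auto. rewrite Hx; ring. Qed.

Lemma laplacian_delta_self d x : length x = d -> laplacian d (delta x) x = -1.
Proof.
  intros Hx. unfold laplacian. rewrite sum_zero.
  - unfold delta. destruct site_eq_dec; [ring|congruence].
  - intros z Hz. unfold delta. destruct site_eq_dec; auto.
    exfalso; eapply neighbors_neq; eauto.
Qed.

Lemma cv_laplacian d (f : nat -> site -> R) (g : site -> R) x :
  (forall z, In z (neighbors d x) -> Un_cv (fun k => f k z) (g z)) ->
  Un_cv (fun k => f k x) (g x) ->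
  Un_cv (fun k => laplacian d (f k) x) (laplacian d g x).
Proof.
  intros Hn Hx. unfold laplacian. apply CV_minus; auto.
  apply CV_mult; [apply cv_const|]. apply cv_sum; auto.
Qed.

Lemma laplacian_first_coordinate (psi : Z -> R) d' (x0 : Z) (xr : list Z) :
  laplacian (S d') (fun y => psi (nth 0 y 0%Z)) (x0 :: xr) =
  / (2 * INR (S d')) * (psi (x0 + 1)%Z + psi (x0 + -1)%Z - 2 * psi x0).
Proof.
  (* the neighbours in the directions 1, ..., d' have the same first coordinate *)
  assert (Hother : forall n s, (1 <= s)%nat ->
    sum_over (flat_map (fun i => [shift (x0 :: xr) i 1%Z; shift (x0 :: xr) i (-1)%Z])
                       (seq s n))
             (fun y => psi (nth 0 y 0%Z))
    = 2 * INR n * psi x0).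
  { induction n as [|n IH]; intros s Hs; simpl; [ring|].
    destruct s as [|s]; [lia|]. simpl. rewrite IH by lia.
    destruct n; simpl; ring. }
  unfold laplacian, neighbors. simpl seq. cbn [flat_map].
  rewrite map_app, sum_app, Hother by lia. cbn -[INR]. rewrite S_INR. field.
  pose proof (pos_INR d'). lra.
Qed.

(** * The toppling dynamics *)

Section Dynamics.
Variables (d : nat) (nu0 : site -> R) (xs : nat -> site).

Lemma run_S k :
  run d nu0 xs (S k) =
  (topple d (nu_k d nu0 xs k) (xs k),
   fun y => u_k d nu0 xs k y +
     (if site_eq_dec y (xs k) then emitted (nu_k d nu0 xs k) (xs k) else 0)).
Proof. unfold nu_k, u_k. simpl. destruct (run d nu0 xs k); reflexivity. Qed.

Lemma nu_S k y : nu_k d nu0 xs (S k) y = topple d (nu_k d nu0 xs k) (xs k) y.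
Proof. unfold nu_k at 1. rewrite run_S. reflexivity. Qed.

Lemma u_S k y : u_k d nu0 xs (S k) y = u_k d nu0 xs k y +
     (if site_eq_dec y (xs k) then emitted (nu_k d nu0 xs k) (xs k) else 0).
Proof. unfold u_k at 1. rewrite run_S. reflexivity. Qed.

Lemma emitted_nonneg mu x : 0 <= emitted mu x.
Proof. unfold emitted. apply Rmax_r. Qed.

Lemma u_mono k y : u_k d nu0 xs k y <= u_k d nu0 xs (S k) y.
Proof.
  rewrite u_S. pose proof (emitted_nonneg (nu_k d nu0 xs k) (xs k)).
  destruct site_eq_dec; lra.
Qed.

Lemma u_nonneg k y : 0 <= u_k d nu0 xs k y.
Proof.
  induction k as [|k IH]; [unfold u_k; simpl; lra|].
  pose proof (u_mono k y); lra.
Qed.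

Lemma nu_eq_laplacian_u k y :
  nu_k d nu0 xs k y = nu0 y + laplacian d (u_k d nu0 xs k) y.
Proof.
  revert y; induction k as [|k IH]; intros y.
  - unfold nu_k, u_k, laplacian; simpl. rewrite sum_zero by auto. ring.
  - rewrite nu_S. unfold topple. rewrite IH.
    set (e := emitted (nu_k d nu0 xs k) (xs k)).
    rewrite (laplacian_ext d (u_k d nu0 xs (S k))
               (fun y => u_k d nu0 xs k y + e * delta (xs k) y)).
    2,3: intros; rewrite u_S; unfold delta; destruct site_eq_dec; fold e; ring.
    unfold laplacian. rewrite sum_lin. ring.
Qed.

Lemma nu_after_topple k : length (xs k) = d -> nu_k d nu0 xs (S k) (xs k) <= 1.
Proof.
  intros H. rewrite nu_S. unfold topple. rewrite laplacian_delta_self by auto.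
  unfold emitted. apply Rmax_case_strong; intros; lra.
Qed.

Lemma nu_limit_le_1 x l : visits_all_io d xs -> length x = d ->
  Un_cv (fun k => nu_k d nu0 xs k x) l -> l <= 1.
Proof.
  intros [Hlen Hvis] Hx Hcv. apply Rnot_lt_le. intros Hl.
  destruct (Hcv (l - 1)) as [N HN]; [lra|].
  destruct (Hvis x Hx N) as [k [Hk Ek]].
  specialize (HN (S k) ltac:(lia)). unfold R_dist in HN. apply Rabs_def2 in HN.
  pose proof (nu_after_topple k (Hlen k)) as Hle. rewrite Ek in Hle. lra.
Qed.

Lemma cv_nu (U : site -> R) x : length x = d ->
  (forall y, length y = d -> Un_cv (fun k => u_k d nu0 xs k y) (U y)) ->
  Un_cv (fun k => nu_k d nu0 xs k x) (nu0 x + laplacian d U x).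
Proof.
  intros Hx H. eapply Un_cv_ext; [intros n; symmetry; apply nu_eq_laplacian_u|].
  apply CV_plus; [apply cv_const|]. apply cv_laplacian; auto.
  intros z Hz. apply H. eapply neighbors_length; eauto.
Qed.

End Dynamics.

(** * Supersolutions and the least action principle *)

Definition supersolution (d : nat) (nu0 w : site -> R) : Prop :=
  (forall y, length y = d -> 0 <= w y) /\
  (forall y, length y = d -> nu0 y + laplacian d w y <= 1).

Lemma odometer_le_supersolution d nu0 (hd : (1 <= d)%nat) (w : site -> R) :
  supersolution d nu0 w ->
  forall xs, (forall k, length (xs k) = d) ->
  forall k y, length y = d -> u_k d nu0 xs k y <= w y.
Proof.
  intros [Hw0 Hw] xs Hxs k. induction k as [|k IH]; intros y Hy.
  - unfold u_k; simpl; auto.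
  - rewrite u_S. destruct site_eq_dec as [E|E]; [|rewrite Rplus_0_r; auto].
    subst y. set (x := xs k) in *. unfold emitted.
    apply Rmax_case; [|rewrite Rplus_0_r; auto].
    (* after toppling, u(x) = u(x) + nu(x) - 1 = (1/2d) sum of u over the
       neighbours + nu0(x) - 1, which is at most the same expression for w *)
    rewrite nu_eq_laplacian_u. specialize (Hw x Hy). unfold laplacian in *.
    assert (Hnb : sum_over (neighbors d x) (u_k d nu0 xs k) <= sum_over (neighbors d x) w).
    { apply sum_le. intros z Hz. apply IH. eapply neighbors_length; eauto. }
    assert (Hp : 0 < / (2 * INR d)).
    { apply Rinv_0_lt_compat. apply lt_0_INR in hd. lra. }
    apply Rmult_le_compat_l with (r := / (2 * INR d)) in Hnb; lra.
Qed.

(** * Construction of a supersolution *)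

Section Ridge.
Variables c b : R.
Hypotheses (Hc : 0 <= c) (Hb : 0 <= b).

(* A convex profile with a concave kink at 0, and its second difference. *)
Definition kink (r : R) := c * (Rabs r - b) ^ 2.
Definition kink_diff2 (r : R) := kink (r + 1) + kink (r - 1) - 2 * kink r.

Lemma kink_nonneg r : 0 <= kink r.
Proof. unfold kink. apply Rmult_le_pos; auto. apply pow2_ge_0. Qed.

Lemma kink_diff2_at_0 : kink_diff2 0 = 2 * c * (1 - 2 * b).
Proof.
  unfold kink_diff2, kink. rewrite Rplus_0_l. replace (0 - 1) with (-1) by ring.
  rewrite Rabs_R0, Rabs_R1, (Rabs_left1 (-1)) by lra. ring.
Qed.

Lemma kink_diff2_le (k : Z) : kink_diff2 (IZR k) <= 2 * c.
Proof.
  destruct (Z.lt_trichotomy k 0) as [Hk|[->|Hk]].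
  - assert (IZR k <= -1) by (apply IZR_le; lia). unfold kink_diff2, kink.
    rewrite (Rabs_left1 (IZR k + 1)), (Rabs_left1 (IZR k - 1)), (Rabs_left1 (IZR k))
      by lra.
    right; ring.
  - rewrite kink_diff2_at_0. nra.
  - assert (1 <= IZR k) by (apply IZR_le; lia). unfold kink_diff2, kink.
    rewrite (Rabs_pos_eq (IZR k + 1)), (Rabs_pos_eq (IZR k - 1)), (Rabs_pos_eq (IZR k))
      by lra.
    right; ring.
Qed.

Definition ridge (L : list site) (t : Z) : R :=
  sum_over L (fun z : site => kink (IZR (t - nth 0 z 0%Z))).

Lemma ridge_nonneg L t : 0 <= ridge L t.
Proof.
  unfold ridge. induction L as [|a L IH]; simpl; [lra|].
  pose proof (kink_nonneg (IZR (t - nth 0 a 0%Z))). lra.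
Qed.

Lemma ridge_diff2 L t : ridge L (t + 1)%Z + ridge L (t + -1)%Z - 2 * ridge L t =
  sum_over L (fun z : site => kink_diff2 (IZR (t - nth 0 z 0%Z))).
Proof.
  induction L as [|z L IH]; unfold ridge in *; simpl; [ring|].
  rewrite <- IH. unfold kink_diff2.
  replace (t + 1 - nth 0 z 0)%Z with ((t - nth 0 z 0) + 1)%Z by ring.
  replace (t + -1 - nth 0 z 0)%Z with ((t - nth 0 z 0) - 1)%Z by ring.
  rewrite (plus_IZR (t - nth 0 z 0%Z)), (minus_IZR (t - nth 0 z 0%Z) 1). ring.
Qed.

Lemma ridge_diff2_bound L t :
  ridge L (t + 1)%Z + ridge L (t + -1)%Z - 2 * ridge L t <= 2 * c * INR (length L).
Proof.
  rewrite ridge_diff2, Rmult_comm.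
  apply (sum_bound _ (2 * c)). intros z. apply kink_diff2_le.
Qed.

Lemma ridge_diff2_bound_in L (y : site) t : In y L -> nth 0 y 0%Z = t ->
  ridge L (t + 1)%Z + ridge L (t + -1)%Z - 2 * ridge L t
  <= 2 * c * INR (length L) - 4 * c * b.
Proof.
  intros Hy Ht. rewrite ridge_diff2.
  pose proof (sum_bound_in _ _ L y Hy (fun z => kink_diff2_le (t - nth 0 z 0%Z))) as Hs.
  cbv beta in Hs. rewrite Ht, Z.sub_diag, kink_diff2_at_0 in Hs. lra.
Qed.

End Ridge.

Lemma supersolution_exists d (nu0 : site -> R) (hd : (1 <= d)%nat)
  (hfin : exists L : list site, forall x, length x = d -> nu0 x <> 0 -> In x L) :
  exists w : site -> R, supersolution d nu0 w.
Proof.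
  destruct hfin as [L HL].
  set (N := INR (length L)). set (S0 := sum_over L (fun z => Rabs (nu0 z))).
  assert (HN : 0 <= N) by apply pos_INR.
  assert (HS : 0 <= S0) by apply sum_abs_nonneg.
  destruct d as [|d']; [lia|]. set (D := INR (S d')).
  assert (HD : 1 <= D) by (apply (le_INR 1 (S d')) in hd; exact hd).
  (* c makes the background curvature N/(N+1) < 1; b absorbs the mass of nu0 *)
  set (c := D / (N + 1)). set (b := (N + 1) * S0).
  assert (Hc : 0 <= c) by (unfold c; apply Rle_mult_inv_pos; lra).
  assert (Hb : 0 <= b) by (unfold b; nra).
  assert (Hbg : / (2 * D) * (2 * c * N) = N / (N + 1)) by (unfold c; field; lra).
  assert (Hmass : / (2 * D) * (4 * c * b) = 2 * S0) by (unfold c, b; field; lra).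
  assert (Hlt1 : N / (N + 1) <= 1).
  { apply (Rmult_le_reg_r (N + 1)); [lra|].
    unfold Rdiv. rewrite Rmult_assoc, Rinv_l by lra. lra. }
  assert (Hp : 0 < / (2 * D)) by (apply Rinv_0_lt_compat; lra).
  exists (fun y => ridge c b L (nth 0 y 0%Z)). split.
  - intros y _. apply ridge_nonneg; auto.
  - intros y Hy. destruct y as [|t yr]; [simpl in Hy; lia|].
    rewrite laplacian_first_coordinate. fold D. simpl nth.
    destruct (Req_dec (nu0 (t :: yr)) 0) as [H0|H0].
    + pose proof (ridge_diff2_bound c b Hc Hb L t) as Hs. fold N in Hs.
      apply Rmult_le_compat_l with (r := / (2 * D)) in Hs; lra.
    + assert (Hin := HL _ Hy H0).
      pose proof (ridge_diff2_bound_in c b Hc Hb L _ t Hin eq_refl) as Hs. fold N in Hs.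
      pose proof (sum_abs_ge nu0 L _ Hin) as Hnu. fold S0 in Hnu.
      apply Rmult_le_compat_l with (r := / (2 * D)) in Hs; [|lra].
      rewrite Rmult_minus_distr_l in Hs. lra.
Qed.

(** * The limit odometer *)

Lemma odometer_limit d nu0 (hd : (1 <= d)%nat)
  (hfin : exists L : list site, forall x, length x = d -> nu0 x <> 0 -> In x L)
  xs : visits_all_io d xs ->
  exists U : site -> R,
    (forall x, length x = d -> Un_cv (fun k => u_k d nu0 xs k x) (U x)) /\
    supersolution d nu0 U.
Proof.
  intros Hvis. destruct (supersolution_exists d nu0 hd hfin) as [w Hw].
  (* a nondecreasing sequence bounded by w x converges *)
  assert (Hex : forall x, exists l, length x = d -> Un_cv (fun k => u_k d nu0 xs k x) l).
  { intros x. destruct (Nat.eq_dec (length x) d) as [Hx|Hx];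
      [|exists 0; intros; contradiction].
    assert (Hub : has_ub (fun k => u_k d nu0 xs k x)).
    { exists (w x). intros r [i ->].
      apply (odometer_le_supersolution d nu0 hd w Hw); auto. apply Hvis. }
    destruct (growing_cv _ (fun k => u_mono d nu0 xs k x) Hub) as [l Hl].
    exists l; auto. }
  set (U := fun x => proj1_sig (constructive_indefinite_description _ (Hex x))).
  assert (HU : forall x, length x = d -> Un_cv (fun k => u_k d nu0 xs k x) (U x)).
  { intros x Hx. unfold U. destruct constructive_indefinite_description; simpl; auto. }
  exists U. split; [|split]; auto.
  - intros x Hx. eapply cv_ge; [apply HU; auto|]. intros; apply u_nonneg.
  - intros x Hx. eapply nu_limit_le_1; eauto. apply cv_nu; auto.
Qed.

(* Abelian property: limits along two such sequences coincide on Z^d, since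
   each limit is a supersolution and so dominates the other odometer. *)
Lemma odometer_limit_unique d nu0 (hd : (1 <= d)%nat) xs xs' (U U' : site -> R) :
  visits_all_io d xs -> visits_all_io d xs' ->
  (forall x, length x = d -> Un_cv (fun k => u_k d nu0 xs k x) (U x)) ->
  (forall x, length x = d -> Un_cv (fun k => u_k d nu0 xs' k x) (U' x)) ->
  supersolution d nu0 U -> supersolution d nu0 U' ->
  forall x, length x = d -> U x = U' x.
Proof.
  intros [Hl _] [Hl' _] Hcv Hcv' Hsup Hsup' x Hx. apply Rle_antisym.
  - eapply cv_le; [apply Hcv; auto|]. intros k.
    apply (odometer_le_supersolution d nu0 hd U'); auto.
  - eapply cv_le; [apply Hcv'; auto|]. intros k.
    apply (odometer_le_supersolution d nu0 hd U); auto.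
Qed.

Theorem proposition1p2 (d : nat) (nu0 : site -> R)
  (hd : (1 <= d)%nat)
  (hnonneg : forall x, length x = d -> 0 <= nu0 x)
  (hfin : exists L : list site, forall x, length x = d -> nu0 x <> 0 -> In x L) :
  exists u nu : site -> R,
    (forall x, length x = d -> nu x <= 1) /\
    forall xs : nat -> site, visits_all_io d xs ->
      forall x, length x = d ->
        (forall k, u_k d nu0 xs k x <= u_k d nu0 xs (S k) x) /\
        Un_cv (fun k => u_k d nu0 xs k x) (u x) /\
        Un_cv (fun k => nu_k d nu0 xs k x) (nu x).
Proof.
  destruct (classic (exists xs, visits_all_io d xs)) as [[xs0 Hvis0]|Hnone].
  - (* take u, nu from a reference sequence; every other sequence has the same limit *)
    destruct (odometer_limit d nu0 hd hfin xs0 Hvis0) as [U [HU Hsup]].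
    exists U, (fun x => nu0 x + laplacian d U x). split; [apply Hsup|].
    intros xs Hvis x Hx.
    destruct (odometer_limit d nu0 hd hfin xs Hvis) as [U' [HU' Hsup']].
    assert (HcvU : forall y, length y = d -> Un_cv (fun k => u_k d nu0 xs k y) (U y)).
    { intros y Hy.
      rewrite (odometer_limit_unique d nu0 hd xs0 xs U U' Hvis0 Hvis HU HU' Hsup Hsup' y Hy).
      auto. }
    split; [intros; apply u_mono|]. split; auto. apply cv_nu; auto.
  - exists (fun _ => 0), (fun _ => 0). split; [intros; lra|].
    intros xs Hvis. exfalso. apply Hnone. eauto.
Qed.
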